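(* For a right $R$-module $M$ the following are equivalent: (a) $M$ is quasi-projective and finite $\Sigma$-Rickart; (b) every finitely $M$-generated submodule of any module in $\mathrm{add}(M)$ is $M$-projective; (c) every finitely $M$-generated submodule of any module in $\mathrm{add}(M)$ is quasi-projective.
   Context: Modules are unitary right $R$-modules; $M^{(n)}$ is the direct sum of $n$ copies of $M$. $M$ is Rickart if $\ker\varphi$ is a direct summand of $M$ for all $\varphi\in\mathrm{End}_R(M)$; $M$ is finite $\Sigma$-Rickart if $M^{(n)}$ is Rickart for all $n>0$. $\mathrm{add}(M)$ is the class of modules isomorphic to a direct summand of $M^{(n)}$ for some integer $n>0$. A module $N$ is finitely $M$-generated if there is an epimorphism $M^{(n)}\to N$ for some $n>0$. A module is quasi-projective if it is projective relative to itself. *)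

From HB Require Import structures.
From mathcomp Require Import all_boot all_order all_algebra.
Set Implicit Arguments. Unset Strict Implicit. Unset Printing Implicit Defensive.
Import GRing.Theory.
Local Open Scope ring_scope.

(* Right R-modules are modelled as left modules over the converse ring R^c. *)
Notation rmodType R := (lmodType (R^c)).

Notation dsum M n := ({ffun 'I_n -> M})%type.

Definition surj (A B : Type) (f : A -> B) : Prop := forall y, exists x, f x = y.

Definition relproj (R : pzRingType) (M N : rmodType R) : Prop :=
  forall (L : rmodType R) (g : {linear M -> L}) (f : {linear N -> L}),
    surj g -> exists h : {linear N -> M}, forall x, g (h x) = f x.

Definition quasi_proj (R : pzRingType) (M : rmodType R) : Prop := relproj M M.

Definition is_submod (R : pzRingType) (M : rmodType R) (S : M -> Prop) : Prop :=
  [/\ S 0, (forall x y, S x -> S y -> S (x + y)) & (forall (a : R^c) x, S x -> S (a *: x))].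

Definition direct_summand (R : pzRingType) (M : rmodType R) (S : M -> Prop) : Prop :=
  is_submod S /\
  exists C : M -> Prop, [/\ is_submod C,
    (forall x, S x -> C x -> x = 0) &
    (forall x, exists a b, [/\ S a, C b & x = a + b])].

Definition rickart (R : pzRingType) (M : rmodType R) : Prop :=
  forall phi : {linear M -> M}, direct_summand (fun x => phi x = 0).

Definition fin_sigma_rickart (R : pzRingType) (M : rmodType R) : Prop :=
  forall n : nat, (0 < n)%N -> rickart (dsum M n).

(* X in add(M): X is isomorphic (via f onto its image) to a direct summand of M^(n). *)
Definition in_add (R : pzRingType) (M X : rmodType R) : Prop :=
  exists n : nat, (0 < n)%N /\
  exists f : {linear X -> dsum M n}, injective f /\ direct_summand (fun y => exists x, f x = y).

(* K is (up to isomorphism) a finitely M-generated submodule of X: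
   K embeds into X and there is an epimorphism M^(n) -> K. *)
Definition fin_M_gen_sub (R : pzRingType) (M X K : rmodType R) : Prop :=
  (exists i : {linear K -> X}, injective i) /\
  exists n : nat, (0 < n)%N /\ exists p : {linear dsum M n -> K}, surj p.

(* We first build quotient modules L/U and the closure properties of relative
   projectivity (epimorphic images of the base, retracts, finite direct sums on
   either side), then relate the Rickart property to split epimorphisms: in a
   Rickart module B (+) C every kernel of a map B -> C is a summand of B, and an
   epimorphism splits exactly when its kernel is a summand.
   (a) => (b): an epimorphism M^(n) -> K onto K <= X <= M^(n0) has a summand
     kernel, so K is a retract of the M-projective module M^(n).
   (b) => (c): K is then M^(n)-projective, hence projective relative to its
     epimorphic image K.
   (c) => (a): M is a submodule of M^(1); for phi in End(M^(n)) the module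
     M^(n) (+) M^(n)/ker phi is a finitely M-generated submodule of M^(n + n),
     and its quasi-projectivity makes M^(n) -> M^(n)/ker phi split. *)

From HB Require Import structures.
From mathcomp Require Import all_boot all_order all_algebra.
From mathcomp Require Import boolp.
Import GRing.Theory.
Set Implicit Arguments. Unset Strict Implicit. Unset Printing Implicit Defensive.
Local Open Scope ring_scope.

Section LinearMaps.
Variable R : pzRingType.

Definition mkLin (U V : rmodType R) (f : U -> V) (lf : linear f) : {linear U -> V} :=
  HB.pack f (GRing.isLinear.Build (R^c) U V *:%R f lf).

Definition pairf (U V W : rmodType R) (f : {linear U -> V}) (g : {linear U -> W})
  (x : U) : (V * W)%type := (f x, g x).

Lemma pairf_linear (U V W : rmodType R) (f : {linear U -> V}) (g : {linear U -> W}) :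
  linear (pairf f g).
Proof. by move=> a x y; rewrite /pairf !linearP. Qed.

HB.instance Definition _ (U V W : rmodType R) (f : {linear U -> V}) (g : {linear U -> W}) :=
  GRing.isLinear.Build (R^c) U (V * W)%type *:%R (@pairf U V W f g) (pairf_linear f g).

Lemma pairfE (U V W : rmodType R) (f : {linear U -> V}) (g : {linear U -> W}) x :
  (pairf f g : {linear U -> (V * W)%type}) x = (f x, g x).
Proof. by []. Qed.

Definition injl (A B : rmodType R) : {linear A -> (A * B)%type} := pairf idfun \0.
Definition injr (A B : rmodType R) : {linear B -> (A * B)%type} := pairf \0 idfun.

Lemma pair_split (A B : rmodType R) (a : A) (b : B) :
  (a, b) = injl A B a + injr A B b :> (A * B)%type.
Proof. by apply: injective_projections; rewrite /= ?addr0 ?add0r. Qed.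

End LinearMaps.

Arguments injl {R A B}.
Arguments injr {R A B}.

Section Submodules.
Variables (R : pzRingType) (L : rmodType R) (U : L -> Prop) (HU : is_submod U).

Lemma submod0 : U 0. Proof. by case: HU. Qed.
Lemma submodD x y : U x -> U y -> U (x + y). Proof. by case: HU => _ + _; apply. Qed.
Lemma submodZ a x : U x -> U (a *: x). Proof. by case: HU => _ _; apply. Qed.
Lemma submodN x : U x -> U (- x). Proof. by move=> Ux; rewrite -scaleN1r; apply: submodZ. Qed.
Lemma submodB x y : U x -> U y -> U (x - y).
Proof. by move=> Ux Uy; apply: submodD Ux (submodN Uy). Qed.

End Submodules.

Section KernelImage.
Variables (R : pzRingType) (A B : rmodType R) (f : {linear A -> B}).

Lemma kernel_submod : is_submod (fun a => f a = 0).
Proof.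
split; first exact: linear0.
  by move=> x y fx0 fy0; rewrite linearD fx0 fy0 addr0.
by move=> a x fx0; rewrite linearZ_LR fx0 scaler0.
Qed.

Lemma image_submod : is_submod (fun b => exists a, f a = b).
Proof.
split; first by exists 0; rewrite linear0.
  by move=> _ _ [x <-] [y <-]; exists (x + y); rewrite linearD.
by move=> r _ [x <-]; exists (r *: x); rewrite linearZ_LR.
Qed.

Lemma kernel_comp_inj (C : rmodType R) (g : {linear B -> C}) :
  injective g -> (fun a => g (f a) = 0) = (fun a => f a = 0).
Proof.
move=> injg; apply/funext => a; apply/propext; split => [|->]; last exact: linear0.
by move=> gfa0; apply: injg; rewrite gfa0 linear0.
Qed.

End KernelImage.

(* The quotient L/U of a module by a submodule: every class is represented by
   a canonical element chosen (classically) among its members. *)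
Section Quotient.
Variables (R : pzRingType) (L : rmodType R) (U : L -> Prop) (HU : is_submod U).

Definition qrep (x : L) : L := choose (fun y => `[< U (y - x) >]) x.

Lemma qrep_sub x : U (qrep x - x).
Proof.
apply/asboolP; apply: (@chooseP _ (fun y => `[< U (y - x) >])).
by apply/asboolP; rewrite subrr; apply: submod0.
Qed.

Lemma qrep_eq x y : U (x - y) -> qrep x = qrep y.
Proof.
move=> Uxy; rewrite /qrep.
have same_class : (fun z => `[< U (z - x) >]) =1 (fun z => `[< U (z - y) >]).
  move=> z; apply/asboolP/asboolP => Uz.
    by have := submodD HU Uz Uxy; rewrite addrA subrK.
  by have := submodB HU Uz Uxy; rewrite opprB addrA subrK.
rewrite (eq_choose same_class); apply: choose_id; apply/asboolP => //.
by rewrite subrr; apply: submod0.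
Qed.

Lemma qrepK x : qrep (qrep x) = qrep x.
Proof. exact/qrep_eq/qrep_sub. Qed.

(* Classes are identified with their representatives; the submodule proof is
   an argument of the carrier so that the module structure can depend on it. *)
Definition quotmod of is_submod U := {x : L | qrep x == x}.

HB.instance Definition _ := Choice.on (quotmod HU).

Definition qproj (x : L) : quotmod HU := exist _ (qrep x) (introT eqP (qrepK x)).

Lemma qproj_eqP x y : qproj x = qproj y <-> U (x - y).
Proof.
split => [/(congr1 val) /= Exy | Uxy]; last exact/val_inj/qrep_eq.
have := submodB HU (qrep_sub y) (qrep_sub x).
by rewrite Exy opprB addrC addrA subrK addrC.
Qed.

Lemma qprojK (q : quotmod HU) : qproj (val q) = q.
Proof. by apply: val_inj => /=; apply/eqP; apply: (valP q). Qed.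

Definition qadd (p q : quotmod HU) : quotmod HU := qproj (val p + val q).
Definition qopp (q : quotmod HU) : quotmod HU := qproj (- val q).
Definition qscale (a : R^c) (q : quotmod HU) : quotmod HU := qproj (a *: val q).

Lemma qprojD x y : qadd (qproj x) (qproj y) = qproj (x + y).
Proof.
apply/qproj_eqP; rewrite /= opprD addrACA.
exact: (submodD HU (qrep_sub x) (qrep_sub y)).
Qed.

Lemma qprojN x : qopp (qproj x) = qproj (- x).
Proof. by apply/qproj_eqP; rewrite /= opprK addrC -opprB; apply/(submodN HU)/qrep_sub. Qed.

Lemma qprojZ a x : qscale a (qproj x) = qproj (a *: x).
Proof. by apply/qproj_eqP; rewrite /= -scalerBr; apply/(submodZ HU)/qrep_sub. Qed.

Lemma qaddA : associative qadd.
Proof. by move=> p q r; rewrite -[p]qprojK -[q]qprojK -[r]qprojK !qprojD addrA. Qed.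
Lemma qaddC : commutative qadd.
Proof. by move=> p q; rewrite -[p]qprojK -[q]qprojK !qprojD addrC. Qed.
Lemma qadd0 : left_id (qproj 0) qadd.
Proof. by move=> q; rewrite -[q]qprojK qprojD add0r. Qed.
Lemma qaddN : left_inverse (qproj 0) qopp qadd.
Proof. by move=> q; rewrite -[q]qprojK qprojN qprojD addNr. Qed.

HB.instance Definition _ := GRing.isZmodule.Build (quotmod HU) qaddA qaddC qadd0 qaddN.

Lemma qscaleA a b q : qscale a (qscale b q) = qscale (a * b) q.
Proof. by rewrite -[q]qprojK !qprojZ scalerA. Qed.
Lemma qscale1 : left_id 1 qscale.
Proof. by move=> q; rewrite -[q]qprojK qprojZ scale1r. Qed.
Lemma qscaleDr : right_distributive qscale qadd.
Proof. by move=> a p q; rewrite -[p]qprojK -[q]qprojK qprojD !qprojZ qprojD scalerDr. Qed.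
Lemma qscaleDl q : {morph qscale^~ q : a b / a + b >-> qadd a b}.
Proof. by move=> a b; rewrite -[q]qprojK !qprojZ qprojD scalerDl. Qed.

HB.instance Definition _ :=
  GRing.Zmodule_isLmodule.Build (R^c) (quotmod HU) qscaleA qscale1 qscaleDr qscaleDl.

Lemma qproj_linear : linear qproj.
Proof. by move=> a x y; rewrite -[RHS]/(qadd (qscale a (qproj x)) (qproj y)) qprojZ qprojD. Qed.

HB.instance Definition _ := GRing.isLinear.Build (R^c) L (quotmod HU) *:%R qproj qproj_linear.

Lemma qproj_surj : surj qproj.
Proof. by move=> q; exists (val q); apply: qprojK. Qed.

Lemma qproj0P x : qproj x = 0 <-> U x.
Proof. by rewrite -(linear0 qproj) qproj_eqP subr0. Qed.

End Quotient.

Arguments qproj_surj {R L U} HU.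

Section InducedMap.
Variables (R : pzRingType) (A B : rmodType R) (f : {linear A -> B}).

Definition qind (q : quotmod (kernel_submod f)) : B := f (val q).

Lemma qindE x : qind (qproj (kernel_submod f) x) = f x.
Proof.
apply/eqP; rewrite -subr_eq0 -linearB; apply/eqP.
exact: (qrep_sub (kernel_submod f)).
Qed.

Lemma qind_linear : linear qind.
Proof.
move=> a p q; rewrite -[p]qprojK -[q]qprojK.
by rewrite -linearP !qindE linearP.
Qed.

HB.instance Definition _ :=
  GRing.isLinear.Build (R^c) (quotmod (kernel_submod f)) B *:%R qind qind_linear.

Lemma qind_inj : injective qind.
Proof.
move=> p q; rewrite -[p]qprojK -[q]qprojK.
by rewrite !qindE => fpq; apply/qproj_eqP; rewrite /= linearB fpq subrr.
Qed.

End InducedMap.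

Arguments qind {R A B} f.

Section RelativeProjectivity.
Variable R : pzRingType.
Implicit Types A B N L : rmodType R.

Lemma relproj_epi A B N (e : {linear A -> B}) :
  surj e -> relproj A N -> relproj B N.
Proof.
move=> surj_e projN L g f surj_g.
have surj_ge : surj (g \o e).
  by move=> y; have [b <-] := surj_g y; have [a <-] := surj_e b; exists a.
have [h h_lifts] := projN L (g \o e) f surj_ge.
by exists (e \o h).
Qed.

Lemma relproj_retract A N N' (s : {linear N' -> N}) (p : {linear N -> N'}) :
  (forall x, p (s x) = x) -> relproj A N -> relproj A N'.
Proof.
move=> ps projN L g f surj_g.
have [h h_lifts] := projN L g (f \o p) surj_g.
by exists (h \o s) => x; rewrite /= h_lifts /= ps.
Qed.

(* An A-projective N lifts along any g : A -> L the maps N -> L landing in the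
   image of g: lift to the epimorphism A -> A/ker g instead. *)
Lemma relproj_image A N L (g : {linear A -> L}) (f : {linear N -> L}) :
  relproj A N -> (forall x, exists a, g a = f x) ->
  exists h : {linear N -> A}, forall x, g (h x) = f x.
Proof.
move=> projN f_in_img.
pose K := kernel_submod g.
pose pre x := sval (cid (f_in_img x)).
have preP x : g (pre x) = f x by rewrite /pre; case: cid.
have pre_lin : linear (fun x => qproj K (pre x)).
  move=> a x y; rewrite -linearP; apply/qproj_eqP.
  by rewrite /= linearB linearP !preP linearP subrr.
have [h h_lifts] := projN _ (qproj K) (mkLin pre_lin) (qproj_surj K).
exists h => x; move/qproj_eqP: (h_lifts x) => /=.
by rewrite linearB preP => /eqP; rewrite subr_eq0 => /eqP.
Qed.

Lemma relproj_prod_src A B N :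
  relproj A N -> relproj B N -> relproj (A * B)%type N.
Proof.
move=> projA projB L g f surj_g.
pose gA : {linear A -> L} := g \o injl; pose gB : {linear B -> L} := g \o injr.
(* First lift modulo the image of A, then correct the error inside A. *)
pose I := image_submod gA.
have surj_B : surj (qproj I \o gB).
  move=> q; have [[a b] gab] := surj_g (val q); exists b.
  rewrite /= -[RHS]qprojK; apply/qproj_eqP; exists (- a).
  by rewrite -gab pair_split linearD /gA /gB /= opprD addrA !linearN addrAC subrr add0r.
have [hB hB_lifts] := projB _ _ (qproj I \o f) surj_B.
have err_in_img x : exists a, gA a = (f \- (gB \o hB)) x.
  by have /qproj_eqP [a gAa] := esym (hB_lifts x); exists a.
have [hA hA_lifts] := relproj_image projA err_in_img.
exists (pairf hA hB) => x.
by rewrite pairfE pair_split linearD [g (injl _)]hA_lifts /= subrK.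
Qed.

Lemma relproj_prod_tgt A N1 N2 :
  relproj A N1 -> relproj A N2 -> relproj A (N1 * N2)%type.
Proof.
move=> proj1 proj2 L g f surj_g.
have [h1 h1_lifts] := proj1 L g (f \o injl) surj_g.
have [h2 h2_lifts] := proj2 L g (f \o injr) surj_g.
exists ((h1 \o fst) \+ (h2 \o snd)) => -[x y].
by rewrite /= linearD h1_lifts h2_lifts /= pair_split linearD.
Qed.

Lemma relproj_section A N (p : {linear A -> N}) :
  surj p -> relproj A N -> exists s : {linear N -> A}, forall y, p (s y) = y.
Proof. by move=> surj_p projN; apply: (projN N p idfun surj_p). Qed.

Lemma relproj_summand A B : quasi_proj (A * B)%type -> relproj A B.
Proof.
move=> qp L g f surj_g.
have surj_gA : surj (g \o @fst A B) by move=> y; have [a <-] := surj_g y; exists (a, 0).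
have [h h_lifts] := qp L (g \o @fst A B) (f \o @snd A B) surj_gA.
by exists (fst \o h \o injr) => b; apply: h_lifts.
Qed.

End RelativeProjectivity.

Section FiniteSums.
Variables (R : pzRingType) (T : rmodType R).

Definition single (x : T) : dsum T 1 := [ffun=> x].
Definition coord0 (v : dsum T 1) : T := v ord0.

Lemma single_linear : linear single.
Proof. by move=> a x y; apply/ffunP => i; rewrite !ffunE. Qed.
Lemma coord0_linear : linear coord0.
Proof. by move=> a x y; rewrite /coord0 !ffunE. Qed.

HB.instance Definition _ := GRing.isLinear.Build (R^c) T (dsum T 1) *:%R single single_linear.
HB.instance Definition _ := GRing.isLinear.Build (R^c) (dsum T 1) T *:%R coord0 coord0_linear.

Lemma coord0_single x : coord0 (single x) = x.
Proof. by rewrite /coord0 ffunE. Qed.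
Lemma single_coord0 v : single (coord0 v) = v.
Proof. by apply/ffunP => i; rewrite ffunE (ord1 i). Qed.

Definition splitv n m (v : dsum T (n + m)) : (dsum T n * dsum T m)%type :=
  ([ffun i => v (lshift m i)], [ffun j => v (rshift n j)]).
Definition catv n m (p : (dsum T n * dsum T m)%type) : dsum T (n + m) :=
  [ffun k => match split k with inl i => p.1 i | inr j => p.2 j end].

Lemma splitv_linear n m : linear (@splitv n m).
Proof. by move=> a x y; apply: injective_projections; apply/ffunP => i; rewrite /= !ffunE. Qed.
Lemma catv_linear n m : linear (@catv n m).
Proof. by move=> a x y; apply/ffunP => k; rewrite !ffunE; case: split => i; rewrite /= !ffunE. Qed.

HB.instance Definition _ n m :=
  GRing.isLinear.Build (R^c) (dsum T (n + m)) _ *:%R (@splitv n m) (@splitv_linear n m).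
HB.instance Definition _ n m :=
  GRing.isLinear.Build (R^c) _ (dsum T (n + m)) *:%R (@catv n m) (@catv_linear n m).

Lemma catvK n m v : @catv n m (splitv v) = v.
Proof.
apply/ffunP => k; rewrite ffunE -[in RHS](splitK k).
by case: (split k) => i; rewrite /= ffunE.
Qed.

Lemma splitvK n m p : @splitv n m (catv p) = p.
Proof.
case: p => a b; apply: injective_projections; apply/ffunP => i; rewrite /= !ffunE.
  by rewrite -[lshift m i]/(unsplit (inl i)) unsplitK.
by rewrite -[rshift n i]/(unsplit (inr i)) unsplitK.
Qed.

End FiniteSums.

Arguments single {R T}.
Arguments coord0 {R T}.

Section RelativeProjectivitySums.
Variable R : pzRingType.
Implicit Types A M N : rmodType R.

Lemma relproj_dsum_src M N n : relproj M N -> relproj (dsum M n) N.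
Proof.
move=> projM; elim: n => [|n IH].
  move=> L g f surj_g; exists \0 => x /=.
  have [v gv] := surj_g (f x).
  by rewrite linear0 -gv (_ : v = 0) ?linear0 //; apply/ffunP => -[].
change (relproj (dsum M (1 + n)) N).
apply: (relproj_epi (e := @catv _ M 1 n)).
  by move=> v; exists (splitv v); apply: catvK.
apply: relproj_prod_src IH.
by apply: (relproj_epi (e := @single _ M)) projM => v; exists (coord0 v); apply: single_coord0.
Qed.

Lemma relproj_dsum_tgt A N n : relproj A N -> relproj A (dsum N n).
Proof.
move=> projN; elim: n => [|n IH].
  move=> L g f surj_g; exists \0 => x /=.
  by rewrite linear0 (_ : x = 0) ?linear0 //; apply/ffunP => -[].
change (relproj A (dsum N (1 + n))).
apply: (relproj_retract (@catvK _ N 1 n)).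
apply: relproj_prod_tgt IH.
exact: (relproj_retract (@single_coord0 _ N)).
Qed.

End RelativeProjectivitySums.

Section DirectSummands.
Variable R : pzRingType.
Implicit Types A B C K : rmodType R.

Lemma preimage_submod A B (d : {linear B -> A}) (S : A -> Prop) :
  is_submod S -> is_submod (fun b => S (d b)).
Proof.
move=> HS; split; first by rewrite linear0; apply: submod0 HS.
  by move=> x y Sx Sy; rewrite linearD; apply: submodD.
by move=> a x Sx; rewrite linearZ_LR; apply: submodZ.
Qed.

Lemma summand_preimage_iso A B (e : {linear A -> B}) (d : {linear B -> A}) (S : A -> Prop) :
  (forall b, e (d b) = b) -> (forall a, d (e a) = a) ->
  direct_summand S -> direct_summand (fun b => S (d b)).
Proof.
move=> ed de [HS [D [HD SD0 SD_span]]]; split; first exact: preimage_submod.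
exists (fun b => D (d b)); split; first exact: preimage_submod.
  by move=> b Sb Db; rewrite -[b]ed (SD0 _ Sb Db) linear0.
move=> b; have [a [c [Sa Dc dbE]]] := SD_span (d b).
by exists (e a), (e c); rewrite !de -linearD -dbE ed.
Qed.

Lemma rickart_iso A B (e : {linear A -> B}) (d : {linear B -> A}) :
  (forall b, e (d b) = b) -> (forall a, d (e a) = a) -> rickart A -> rickart B.
Proof.
move=> ed de rickA phi.
have d_inj : injective d by move=> x y /(congr1 e); rewrite !ed.
have -> : (fun b => phi b = 0) = (fun b => (d \o phi \o e) (d b) = 0).
  by rewrite -(kernel_comp_inj phi d_inj); apply/funext => b /=; rewrite ed.
exact: summand_preimage_iso ed de (rickA _).
Qed.

(* In a Rickart module B (+) C, the kernel of any phi : B -> C is a direct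
   summand of B: apply the Rickart property to (b, c) |-> (0, phi b). *)
Lemma rickart_hom_kernel B C (phi : {linear B -> C}) :
  rickart (B * C)%type -> direct_summand (fun b => phi b = 0).
Proof.
move=> rickBC.
pose psi : {linear (B * C)%type -> (B * C)%type} := injr \o phi \o fst.
have [_ [D [HD kerD0 kerD_span]]] := rickBC psi.
have kerE p : psi p = 0 <-> phi p.1 = 0.
  split => [/(congr1 snd) //|/= ->]; exact: linear0.
split; first exact: kernel_submod.
exists (fun b => exists c, D (b, c)); split.
- split; first by exists 0; apply: submod0 HD.
    by move=> x y [c Dc] [c' Dc']; exists (c + c'); exact: (submodD HD Dc Dc').
  by move=> a x [c Dc]; exists (a *: c); exact: (submodZ HD a Dc).
- by move=> b phib0 [c Dc]; have /(congr1 fst) := kerD0 (b, c) (proj2 (kerE (b, c)) phib0) Dc.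
- move=> b; have [[a1 a2] [[d1 d2] [/kerE phia1 Dd bE]]] := kerD_span (b, 0).
  by exists a1, d1; split; [|exists d2|move/(congr1 fst): bE].
Qed.

Lemma kernel_summand_section B K (p : {linear B -> K}) :
  surj p -> direct_summand (fun b => p b = 0) ->
  exists s : {linear K -> B}, forall y, p (s y) = y.
Proof.
move=> surj_p [_ [D [HD kerD0 kerD_span]]].
have lift_in_D y : exists c, D c /\ p c = y.
  have [x <-] := surj_p y; have [a [c [pa0 Dc ->]]] := kerD_span x.
  by exists c; rewrite linearD pa0 add0r.
pose s y := sval (cid (lift_in_D y)).
have [sD ps] : (forall y, D (s y)) /\ (forall y, p (s y) = y).
  by split=> y; rewrite /s; case: cid => c [].
have s_lin : linear s.
  move=> a x y; apply/eqP; rewrite -subr_eq0; apply/eqP; apply: kerD0.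
    by rewrite linearB linearP !ps subrr.
  exact: (submodB HD (sD _) (submodD HD (submodZ HD a (sD x)) (sD y))).
by exists (mkLin s_lin).
Qed.

Lemma section_kernel_summand B K (p : {linear B -> K}) (s : {linear K -> B}) :
  (forall y, p (s y) = y) -> direct_summand (fun b => p b = 0).
Proof.
move=> ps; split; first exact: kernel_submod.
exists (fun x => exists q, s q = x); split; first exact: image_submod.
  by move=> x + [y sy]; rewrite -sy ps => ->; rewrite linear0.
move=> x; exists (x - s (p x)), (s (p x)); split; last by rewrite subrK.
  by rewrite linearB ps subrr.
by exists (p x).
Qed.

Lemma surj_image_summand A B (f : {linear A -> B}) :
  surj f -> direct_summand (fun y => exists x, f x = y).
Proof.
move=> surj_f; split; first exact: image_submod.
exists (fun y => y = 0); split => //.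
  by split=> // [x y -> ->|a x ->]; rewrite ?addr0 ?scaler0.
by move=> x; exists x, 0; rewrite addr0.
Qed.

End DirectSummands.

(* ker phi is a direct summand of A as soon as A (+) A/ker phi is
   quasi-projective: then A/ker phi is A-projective, so A -> A/ker phi splits. *)
Lemma kernel_summand_of_quasi_proj (R : pzRingType) (A B : rmodType R) (phi : {linear A -> B}) :
  quasi_proj (A * quotmod (kernel_submod phi))%type -> direct_summand (fun a => phi a = 0).
Proof.
move=> qp; have [s ps] := relproj_section (qproj_surj _) (relproj_summand qp).
have -> : (fun a => phi a = 0) = (fun a => qproj (kernel_submod phi) a = 0).
  by apply/funext => a; apply/propext; rewrite qproj0P.
exact: section_kernel_summand ps.
Qed.

Section Characterisation.
Variables (R : pzRingType) (M : rmodType R).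

Lemma rickart_dsum_pair n m :
  fin_sigma_rickart M -> (0 < n + m)%N -> rickart (dsum M n * dsum M m)%type.
Proof.
by move=> rickM nm_gt0; apply: (rickart_iso (@splitvK _ M n m) (@catvK _ M n m)); apply: rickM.
Qed.

(* (a) => (b): for p : M^(n) -> K epi, i : K -> X and f : X -> M^(n0) mono,
   ker p = ker (f o i o p) is a direct summand by the Rickart property of
   M^(n) (+) M^(n0); hence K is a retract of the M-projective module M^(n). *)
Lemma fgen_sub_relproj (X K : rmodType R) :
  quasi_proj M -> fin_sigma_rickart M -> in_add M X -> fin_M_gen_sub M X K -> relproj M K.
Proof.
move=> qpM rickM [n0 [_ [f [f_inj _]]]] [[i i_inj] [n [n_gt0 [p surj_p]]]].
have rick2 : rickart (dsum M n * dsum M n0)%type.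
  by apply: rickart_dsum_pair rickM _; rewrite addn_gt0 n_gt0.
have := rickart_hom_kernel (f \o i \o p) rick2.
rewrite /= (kernel_comp_inj (i \o p) f_inj) (kernel_comp_inj p i_inj) => ker_p.
have [s ps] := kernel_summand_section surj_p ker_p.
exact: relproj_retract ps (relproj_dsum_tgt qpM).
Qed.

Lemma relproj_image_quasi_proj (K : rmodType R) n (p : {linear dsum M n -> K}) :
  surj p -> relproj M K -> quasi_proj K.
Proof. by move=> surj_p projK; apply: relproj_epi surj_p (relproj_dsum_src projK). Qed.

Lemma in_add_iso (X : rmodType R) n (f : {linear X -> dsum M n}) :
  (0 < n)%N -> injective f -> surj f -> in_add M X.
Proof.
by move=> n_gt0 f_inj surj_f; exists n; split=> //; exists f; split=> //; apply: surj_image_summand.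
Qed.

End Characterisation.

Section QuasiProjectiveSubmodules.
Variables (R : pzRingType) (M : rmodType R).
Hypothesis fgen_qp :
  forall X K : rmodType R, in_add M X -> fin_M_gen_sub M X K -> quasi_proj K.

(* M itself is such a submodule of M = M^(1). *)
Lemma quasi_proj_of_fgen : quasi_proj M.
Proof.
apply: (fgen_qp (X := M)).
  apply: (in_add_iso (f := @single _ M)) => // [x y /(congr1 coord0)|v].
    by rewrite !coord0_single.
  by exists (coord0 v); apply: single_coord0.
split; first by exists idfun.
by exists 1%N; split=> //; exists (@coord0 _ M) => x; exists (single x); apply: coord0_single.
Qed.

(* For phi in End(M^(n)), the module M^(n) (+) M^(n)/ker phi embeds into
   M^(n + n) via (a, [b]) |-> (a, phi b) and is an image of M^(n + n). *)
Lemma rickart_of_fgen n : (0 < n)%N -> rickart (dsum M n).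
Proof.
move=> n_gt0 phi; apply: kernel_summand_of_quasi_proj.
have nn_gt0 : (0 < n + n)%N by rewrite addn_gt0 n_gt0.
apply: (fgen_qp (X := dsum M (n + n))).
  by apply: (in_add_iso (f := idfun)) => // v; exists v.
split.
  exists (@catv _ M n n \o pairf fst (qind phi \o snd)) => -[a q] [a' q'] /=.
  move=> /(congr1 (@splitv _ M n n)); rewrite !splitvK => -[-> /qind_inj ->] //.
exists (n + n)%N; split=> //.
exists (pairf (fst \o @splitv _ M n n) (qproj (kernel_submod phi) \o snd \o @splitv _ M n n)).
move=> [a q]; exists (catv (a, val q)).
rewrite pairfE /=; have /= [-> ->] := @splitvK _ M n n (a, val q).
by rewrite qprojK.
Qed.

End QuasiProjectiveSubmodules.

Unset Implicit Arguments.

Theorem mainTheorem5 (R : pzRingType) (M : rmodType R) :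
  [<-> quasi_proj M /\ fin_sigma_rickart M;
       forall X K : rmodType R, in_add M X -> fin_M_gen_sub M X K -> relproj M K;
       forall X K : rmodType R, in_add M X -> fin_M_gen_sub M X K -> quasi_proj K].
Proof.
tfae.
- by move=> [qpM rickM] X K; apply: fgen_sub_relproj.
- move=> fgen_proj X K addX genK; have [_ [n [_ [p surj_p]]]] := genK.
  exact: relproj_image_quasi_proj surj_p (fgen_proj X K addX genK).
- move=> fgen_qp; split; first exact: quasi_proj_of_fgen.
  by move=> n; apply: rickart_of_fgen.
Qed.
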